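(* Let $\tilde F:\mathbb C^8\to\mathbb C^8$ be a homogeneous (polynomial, degree $p$) vector field equivariant with respect to the $[8,8]$ representation of $\Gamma=D_4\dot+T^2$. Then there exists an $\mathcal E(2)$-equivariant polynomial vector field $\mathcal F$ of degree $p$ on $E_\kappa$ with $\tilde F=\mathcal F|_{E^c}$ if and only if for every $\theta\in\mathbb R$, $R_\theta\tilde F(\Phi)=\tilde F(R_\theta\Phi)$ for all $\Phi\in E^c$ with $R_\theta\Phi\in E^c$.
   Context: Integers $l_1>l_2$, $l_1>n_1>0$, $l_2>n_2>0$ with $\kappa^2=l_1^2+n_1^2=l_2^2+n_2^2$; $A(\kappa)=\{k:|k|=\kappa\}$, $E_\kappa$ = space of $a:A(\kappa)\to\mathbb C$ with $\sum|a(k)|<\infty$. Wave vectors $q_1=(l_1,n_1)$, $q_2=(l_1,-n_1)$, $q_3=(n_1,l_1)$, $q_4=(n_1,-l_1)$, $p_1=(l_2,n_2)$, $p_2=(l_2,-n_2)$, $p_3=(n_2,l_2)$, $p_4=(n_2,-l_2)$, $\tilde A=\{\pm q_i,\pm p_j\}$; $E^c\subset E_\kappa$ is the real space of $a$ supported in $\tilde A$ with $a(-k)=\overline{a(k)}$, identified with $\mathbb C^8$ via $z_i=a(q_i)$, $w_j=a(p_j)$. $\mathcal E(2)$ acts by $(\gamma a)(k)=a(\gamma^{-1}k)$ ($\gamma\in O(2)$) and $(T_{s,t}a)(k)=e^{-i(sk_x+tk_y)}a(k)$; $R_\theta$ is counterclockwise rotation; $\Gamma$ is generated by $\gamma_1(x,y)=(-x,y)$,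 $\gamma_2(x,y)=(y,x)$ and $T_{s,t}$ with $(s,t)\in(\mathbb R/2\pi\mathbb Z)^2$. An $\mathcal E(2)$-equivariant polynomial vector field of degree $p$ on $E_\kappa$ is a map on finitely supported $a$ of the form $\mathcal F(a)(k)=\sum_{k_1,\dots,k_p\in A(\kappa)}P(k,k_1,\dots,k_p)a(k_1)\cdots a(k_p)$ (finitely many nonzero terms) commuting with all of $\mathcal E(2)$. *)

From HB Require Import structures.
From mathcomp Require Import all_boot all_order all_algebra.
From mathcomp Require Import all_classical all_reals.
From mathcomp Require Import exp trigo.
From mathcomp Require Import complex.
Set Implicit Arguments. Unset Strict Implicit. Unset Printing Implicit Defensive.
Import Order.TTheory GRing.Theory Num.Theory.
Local Open Scope ring_scope.

Section Defs.
Variable R : realType.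
Local Notation C := (R[i]).

Definition pt := (R * R)%type.
Definition ptN (k : pt) : pt := (- k.1, - k.2).

Definition onCircle (kap2 : R) (k : pt) : bool := k.1 ^+ 2 + k.2 ^+ 2 == kap2.

(* elements of E_kappa are represented by functions pt -> C; only their
   values on A(kappa) matter. *)
Definition efield := pt -> C.

Definition eqEk (kap2 : R) (a b : efield) : Prop :=
  forall k, onCircle kap2 k -> a k = b k.

Definition fsupp (kap2 : R) (a : efield) (s : seq pt) : Prop :=
  [/\ uniq s, all (onCircle kap2) s & forall k, a k != 0 -> k \in s].

Definition finsupp (kap2 : R) (a : efield) : Prop := exists s, fsupp kap2 a s.

(* polynomial vector efield of degree p:
   F(a)(k) = sum_{k_1..k_p in A(kappa)} P(k,k_1..k_p) a(k_1)...a(k_p),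
   the sum being over the (finite) support of a. *)
Definition isPolyVF (kap2 : R) (p : nat) (F : efield -> efield) : Prop :=
  exists P : pt -> p.-tuple pt -> C,
    forall (a : efield) (s : seq pt), fsupp kap2 a s ->
    forall k, onCircle kap2 k ->
      F a k = \sum_(f : {ffun 'I_p -> 'I_(size s)})
                 P k [tuple nth (0, 0) s (f i) | i < p] *
                 \prod_(i < p) a (nth (0, 0) s (f i)).

Definition mxapp (g : 'M[R]_2) (k : pt) : pt :=
  (g 0 0 * k.1 + g 0 1 * k.2, g 1 0 * k.1 + g 1 1 * k.2).

Definition orthogonal2 (g : 'M[R]_2) : Prop := g^T *m g = 1%:M.

Definition actO (g : 'M[R]_2) (a : efield) : efield :=
  fun k => a (mxapp (invmx g) k).

Definition expi (x : R) : C := Complex (cos x) (sin x).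

Definition actT (s t : R) (a : efield) : efield :=
  fun k => expi (- (s * k.1 + t * k.2)) * a k.

Definition E2equivariant (kap2 : R) (F : efield -> efield) : Prop :=
  forall a, finsupp kap2 a ->
    (forall g, orthogonal2 g -> eqEk kap2 (F (actO g a)) (actO g (F a))) /\
    (forall s t, eqEk kap2 (F (actT s t a)) (actT s t (F a))).

Definition rotmx (th : R) : 'M[R]_2 :=
  \matrix_(i < 2, j < 2)
    if i == 0 then (if j == 0 then cos th else - sin th)
    else (if j == 0 then sin th else cos th).

Definition gamma1 : 'M[R]_2 :=
  \matrix_(i < 2, j < 2) if i == j then (if i == 0 then -1 else 1) else 0.
Definition gamma2 : 'M[R]_2 :=
  \matrix_(i < 2, j < 2) if i == j then 0 else 1.

(* wave vectors q_1..q_4, p_1..p_4 (indices 0..7) *)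
Definition wv (l1 n1 l2 n2 : nat) (i : 'I_8) : pt :=
  match val i with
  | 0 => (l1%:R, n1%:R)
  | 1 => (l1%:R, - n1%:R)
  | 2 => (n1%:R, l1%:R)
  | 3 => (n1%:R, - l1%:R)
  | 4 => (l2%:R, n2%:R)
  | 5 => (l2%:R, - n2%:R)
  | 6 => (n2%:R, l2%:R)
  | _ => (n2%:R, - l2%:R)
  end.

Definition inAt (l1 n1 l2 n2 : nat) (k : pt) : bool :=
  [exists i : 'I_8, (k == wv l1 n1 l2 n2 i) || (k == ptN (wv l1 n1 l2 n2 i))].

(* E^c : a supported in tilde A (a subset of A(kappa), so a vanishes off the circle) with a(-k) = conj(a(k)) *)
Definition inEc (l1 n1 l2 n2 : nat) (a : efield) : Prop :=
  (forall k, a k != 0 -> inAt l1 n1 l2 n2 k) /\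
  (forall k, a (ptN k) = conjc (a k)).

(* identification E^c ~ C^8 : z_i = a(q_i), w_j = a(p_j) *)
Definition coordEc (l1 n1 l2 n2 : nat) (a : efield) : 'rV[C]_8 :=
  \row_i a (wv l1 n1 l2 n2 i).

Definition embEc (l1 n1 l2 n2 : nat) (z : 'rV[C]_8) : efield :=
  fun k => \sum_(i < 8)
    ((k == wv l1 n1 l2 n2 i)%:R * z 0 i +
     (k == ptN (wv l1 n1 l2 n2 i))%:R * conjc (z 0 i)).

(* homogeneous polynomial map of degree p on C^8 = R^16, i.e. each component
   is a homogeneous polynomial of degree p in (z, conj z) *)
Definition homogPoly (p : nat) (Ft : 'rV[C]_8 -> 'rV[C]_8) : Prop :=
  exists c : 'I_8 -> {ffun 'I_16 -> 'I_p.+1} -> C,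
    forall z j,
      Ft z 0 j =
        \sum_(m : {ffun 'I_16 -> 'I_p.+1} | (\sum_(i < 16) (m i : nat))%N == p)
          c j m * \prod_(i < 16)
             (if (i < 8)%N then z 0 (inord i) else conjc (z 0 (inord (i - 8)))) ^+ (m i).

(* equivariance w.r.t. the [8,8] representation of Gamma = D4 |x T^2 on
   C^8 ~ E^c, generated by gamma1, gamma2 and T_{s,t} *)
Definition Gamma_equivariant (l1 n1 l2 n2 : nat) (Ft : 'rV[C]_8 -> 'rV[C]_8) : Prop :=
  let emb := embEc l1 n1 l2 n2 in
  let crd := coordEc l1 n1 l2 n2 in
  (forall z, Ft (crd (actO gamma1 (emb z))) = crd (actO gamma1 (emb (Ft z)))) /\
  (forall z, Ft (crd (actO gamma2 (emb z))) = crd (actO gamma2 (emb (Ft z)))) /\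
  (forall s t z, Ft (crd (actT s t (emb z))) = crd (actT s t (emb (Ft z)))).

End Defs.

From HB Require Import structures.
From mathcomp Require Import all_boot all_order all_algebra.
From mathcomp Require Import all_classical all_reals.
From mathcomp Require Import exp trigo.
From mathcomp Require Import complex.
From mathcomp Require Import ring lra zify.
Import Order.TTheory GRing.Theory Num.Theory.
Local Open Scope ring_scope.
Set Implicit Arguments. Unset Strict Implicit. Unset Printing Implicit Defensive.

(* Necessity: restrict the E(2)-equivariance of the extension to E^c.
   Sufficiency: the kernel P(k, k_1, .., k_p) is read off from Ft itself.
   Evaluating Ft on the packet sum_x (w_x b_x delta_{k_x} + c.c.) and averaging
   over fourth roots of unity w_x isolates the coefficient of the monomial
   Phi(k_1) .. Phi(k_p).  Translation equivariance kills this coefficient unless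
   k_1 + .. + k_p = k, and the rotation hypothesis together with
   gamma1-equivariance makes it O(2)-invariant, every orthogonal map being a
   rotation possibly composed with gamma1.  Transporting each configuration
   that is congruent to one inside tilde A therefore yields a well-defined
   O(2)-invariant kernel supported on k_1 + .. + k_p = k; its polynomial field
   is E(2)-equivariant and restricts to Ft on E^c. *)

Section WordSums.
Variable V : nmodType.

Fixpoint wordsum (T : Type) (s : seq T) (n : nat) (H : seq T -> V) : V :=
  if n is n'.+1 then \sum_(x <- s) wordsum s n' (fun u => H (x :: u)) else H [::].

Lemma wordsum_map (T U : Type) (g : T -> U) (s : seq T) n (H : seq U -> V) :
  wordsum (map g s) n H = wordsum s n (fun u => H (map g u)).
Proof.
elim: n H => [//|n IH] H /=; rewrite big_map; apply: eq_bigr => x _.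
by rewrite IH.
Qed.

Lemma big_ffun_ordS (I : finType) n (W : {ffun 'I_n.+1 -> I} -> V) :
  \sum_(f : {ffun 'I_n.+1 -> I}) W f =
  \sum_(i : I) \sum_(f : {ffun 'I_n -> I})
     W [ffun x => if unlift ord0 x is Some y then f y else i].
Proof.
rewrite pair_bigA /=.
pose h (q : I * {ffun 'I_n -> I}) : {ffun 'I_n.+1 -> I} :=
  [ffun x => if unlift ord0 x is Some y then q.2 y else q.1].
rewrite (reindex h) //=.
exists (fun g => (g ord0, [ffun y => g (lift ord0 y)])) => [[i f]|g] _ /=.
  rewrite /h /= !ffunE unlift_none; congr pair.
  by apply/ffunP => y; rewrite !ffunE liftK.
by apply/ffunP => x; rewrite /h !ffunE; case: unliftP => [y ->|->]; rewrite ?ffunE.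
Qed.

Lemma sum_ffun_wordsum (I : finType) n (H : seq I -> V) :
  \sum_(f : {ffun 'I_n -> I}) H (map f (enum 'I_n)) = wordsum (enum I) n H.
Proof.
elim: n H => [|n IH] H /=.
  have f0 : {ffun 'I_0 -> I} by apply: finfun => -[].
  rewrite (big_pred1 f0) ?enum_ord0 // => f.
  by apply/esym/eqP/ffunP => -[].
rewrite big_ffun_ordS big_enum /=; apply: eq_bigr => i _.
rewrite -IH; apply: eq_bigr => f _; congr H.
rewrite enum_ordSl /= ffunE unlift_none -map_comp; congr cons.
by apply: eq_map => y /=; rewrite ffunE liftK.
Qed.

Lemma sum_ffun_nth_wordsum (T : Type) (x0 : T) (s : seq T) n (H : seq T -> V) :
  \sum_(f : {ffun 'I_n -> 'I_(size s)})
     H (map (fun x => nth x0 s (f x)) (enum 'I_n)) = wordsum s n H.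
Proof.
transitivity (\sum_(f : {ffun 'I_n -> 'I_(size s)})
   (fun u => H (map (fun i : 'I_(size s) => nth x0 s i) u)) (map f (enum 'I_n))).
  by apply: eq_bigr => f _ /=; rewrite -map_comp.
rewrite (@sum_ffun_wordsum _ n (fun u => H (map (fun i : 'I_(size s) => nth x0 s i) u))).
rewrite -(wordsum_map (fun i : 'I_(size s) => nth x0 s i)).
suff -> : map (fun i : 'I_(size s) => nth x0 s i) (enum 'I_(size s)) = s by [].
by rewrite (map_comp (nth x0 s) val) val_enum_ord -/(mkseq _ _) mkseq_nth.
Qed.

Lemma wordsum_eq0 (T : Type) (s : seq T) n (H : seq T -> V) :
  (forall u, H u = 0) -> wordsum s n H = 0.
Proof.
elim: n H => [|n IH] H H0 /=; first exact: H0.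
by rewrite big1 // => x _; apply: IH.
Qed.

Lemma eq_wordsum_support (T : eqType) (good : pred T) (s s' : seq T) n
    (H : seq T -> V) :
  uniq s -> uniq s' -> {subset good <= s} -> {subset good <= s'} ->
  (forall u, ~~ all good u -> H u = 0) -> wordsum s n H = wordsum s' n H.
Proof.
move=> us us' gs gs'.
have drop_bad (r : seq T) (K : T -> V) : (forall x, ~~ good x -> K x = 0) ->
    \sum_(x <- r) K x = \sum_(x <- [seq x <- r | good x]) K x.
  move=> K0; rewrite big_filter [LHS](bigID good) /=.
  by rewrite [X in _ + X]big1 ?addr0.
elim: n H => [|n IH] H H0 //=.
have bad x : ~~ good x -> wordsum s' n (fun u => H (x :: u)) = 0.
  by move=> gx; apply: wordsum_eq0 => u; apply: H0; rewrite /= (negbTE gx).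
transitivity (\sum_(x <- s) wordsum s' n (fun u => H (x :: u))).
  apply: eq_bigr => x _; apply: IH => u hu; apply: H0 => /=.
  by rewrite negb_and hu orbT.
rewrite [LHS](drop_bad _ _ bad) [RHS](drop_bad _ _ bad).
apply: perm_big; apply: uniq_perm; rewrite ?filter_uniq //.
by move=> x; rewrite !mem_filter; case gx: (good x) => //=; rewrite gs ?gs'.
Qed.

End WordSums.

Lemma wordsum_scale (C : pzSemiRingType) (T : Type) (s : seq T) n
    (H H' : seq T -> C) (c : C) :
  (forall u, size u = n -> H u = c * H' u) -> wordsum s n H = c * wordsum s n H'.
Proof.
elim: n H H' => [|n IH] H H' h /=; first exact: h.
rewrite mulr_sumr; apply: eq_bigr => x _; apply: IH => u hu; apply: h => /=.
by rewrite hu.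
Qed.

Lemma big_map_enum_ord (R T : Type) (idx : R) (op : R -> R -> R) n (g : 'I_n -> T)
    (F : T -> R) :
  \big[op/idx]_(y <- map g (enum 'I_n)) F y = \big[op/idx]_(i < n) F (g i).
Proof. by rewrite big_map enumT unlock. Qed.

Section PlaneGeometry.
Variable R : realType.
Implicit Types (g h : 'M[R]_2) (k : pt R) (th : R).

Lemma ord2_cases (i : 'I_2) : i = 0 \/ i = 1.
Proof. by case: i => [[|[|//]] ?]; [left|right]; apply: val_inj. Qed.

Lemma big_ord2 (F : 'I_2 -> R) : \sum_(j < 2) F j = F 0 + F 1.
Proof. by rewrite big_ord_recl big_ord1; congr (F _ + F _); apply: val_inj. Qed.

Lemma mxappM g h k : mxapp (g *m h) k = mxapp g (mxapp h k).
Proof. by rewrite /mxapp !mxE !big_ord2 /=; congr pair; ring. Qed.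

Lemma mxapp1 k : mxapp 1%:M k = k.
Proof. by case: k => x y; rewrite /mxapp !mxE /=; congr pair; ring. Qed.

Lemma mxappN g k : mxapp g (ptN k) = ptN (mxapp g k).
Proof. by rewrite /mxapp /ptN /=; congr pair; ring. Qed.

Lemma mxapp_rotmx th k :
  mxapp (rotmx th) k = (cos th * k.1 - sin th * k.2, sin th * k.1 + cos th * k.2).
Proof. by rewrite /mxapp !mxE /=; congr pair; ring. Qed.

Lemma mxapp_gamma1 k : mxapp (gamma1 R) k = (- k.1, k.2).
Proof. by rewrite /mxapp !mxE /=; congr pair; ring. Qed.

Lemma orthogonal2_entries g : orthogonal2 g ->
  [/\ g 0 0 ^+ 2 + g 1 0 ^+ 2 = 1, g 0 1 ^+ 2 + g 1 1 ^+ 2 = 1 &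
      g 0 0 * g 0 1 + g 1 0 * g 1 1 = 0].
Proof.
move=> og; have e i j : (g^T *m g) i j = (1%:M : 'M[R]_2) i j by rewrite og.
by move: (e 0 0) (e 1 1) (e 0 1); rewrite !mxE !big_ord2 !mxE /= !expr2 => -> -> ->.
Qed.

Lemma orthogonal2P g :
  (forall i j, (g^T *m g) i j = (1%:M : 'M[R]_2) i j) -> orthogonal2 g.
Proof. by move=> e; apply/matrixP => i j; rewrite e. Qed.

Lemma orthogonal2_1 : orthogonal2 (1%:M : 'M[R]_2).
Proof. by rewrite /orthogonal2 trmx1 mul1mx. Qed.

Lemma orthogonal2M g h : orthogonal2 g -> orthogonal2 h -> orthogonal2 (g *m h).
Proof.
by move=> og oh; rewrite /orthogonal2 trmx_mul -mulmxA (mulmxA g^T) og mul1mx.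
Qed.

Lemma orthogonal2_invmx g : orthogonal2 g -> invmx g = g^T.
Proof.
move=> og; have og' := mulmx1C og; have [gu _] := mulmx1_unit og'.
by rewrite -[invmx g]mulmx1 -og' mulmxA mulVmx // mul1mx.
Qed.

Lemma orthogonal2V g : orthogonal2 g -> orthogonal2 (invmx g).
Proof.
by move=> og; rewrite /orthogonal2 orthogonal2_invmx // trmxK (mulmx1C og).
Qed.

Lemma mxappVK g : orthogonal2 g -> cancel (mxapp g) (mxapp (invmx g)).
Proof. by move=> og k; rewrite -mxappM orthogonal2_invmx // og mxapp1. Qed.

Lemma mxappKV g : orthogonal2 g -> cancel (mxapp (invmx g)) (mxapp g).
Proof.
by move=> og k; rewrite -mxappM orthogonal2_invmx // (mulmx1C og) mxapp1.
Qed.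

Lemma mxapp_inj g : orthogonal2 g -> injective (mxapp g).
Proof. by move/mxappVK/can_inj. Qed.

Lemma onCircle_mxapp g kap2 k : orthogonal2 g ->
  onCircle kap2 (mxapp g k) = onCircle kap2 k.
Proof.
move=> /orthogonal2_entries [e1 e2 e3]; rewrite /onCircle /mxapp /=.
suff -> : (g 0 0 * k.1 + g 0 1 * k.2) ^+ 2 + (g 1 0 * k.1 + g 1 1 * k.2) ^+ 2
          = k.1 ^+ 2 + k.2 ^+ 2 by [].
transitivity ((g 0 0 ^+ 2 + g 1 0 ^+ 2) * k.1 ^+ 2 + (g 0 1 ^+ 2 + g 1 1 ^+ 2) * k.2 ^+ 2
    + 2 * (g 0 0 * g 0 1 + g 1 0 * g 1 1) * k.1 * k.2); first by ring.
by rewrite e1 e2 e3; ring.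
Qed.

Lemma orthogonal2_rotmx th : orthogonal2 (rotmx th).
Proof.
apply: orthogonal2P => i j; have cs := cos2Dsin2 th.
by case: (ord2_cases i) => ->; case: (ord2_cases j) => ->;
  rewrite !mxE !big_ord2 !mxE /= -cs; ring.
Qed.

Lemma orthogonal2_gamma1 : orthogonal2 (gamma1 R).
Proof.
apply: orthogonal2P => i j.
by case: (ord2_cases i) => ->; case: (ord2_cases j) => ->;
  rewrite !mxE !big_ord2 !mxE /=; ring.
Qed.

Lemma unit_circle_angle (a b : R) : a ^+ 2 + b ^+ 2 = 1 ->
  exists th, cos th = a /\ sin th = b.
Proof.
move=> ab1; have a_bound : -1 <= a <= 1 by apply/andP; split; nra.
have cos_acos : cos (acos a) = a by case: (acos_def a_bound).
have sin_acos : sin (acos a) = `|b|.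
  by rewrite sin_acos // -sqrtr_sqr -ab1; congr Num.sqrt; ring.
case: (lerP 0 b) => b_sign.
  by exists (acos a); rewrite cos_acos sin_acos ger0_norm.
by exists (- acos a); rewrite cosN sinN cos_acos sin_acos ltr0_norm // opprK.
Qed.

Lemma orthogonal2_rot_refl g : orthogonal2 g -> exists th,
  mxapp g =1 mxapp (rotmx th) \/ mxapp g =1 mxapp (rotmx th) \o mxapp (gamma1 R).
Proof.
move=> /orthogonal2_entries [e1 e2 e3].
set a := g 0 0 in e1 e3 *; set c := g 1 0 in e1 e3 *.
set b := g 0 1 in e2 e3 *; set d := g 1 1 in e2 e3 *.
set det := a * d - b * c.
(* Orthonormality of the columns forces [(b, d) = det * (- c, a)]. *)
have eb : b = - c * det.
  have : b + c * det = b * (1 - (a ^+ 2 + c ^+ 2)) + a * (a * b + c * d).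
    by rewrite /det; ring.
  by rewrite e1 e3 subrr !mulr0 addr0 => /eqP; rewrite addr_eq0 => /eqP ->; ring.
have ed : d = a * det.
  have : d - a * det = d * (1 - (a ^+ 2 + c ^+ 2)) + c * (a * b + c * d).
    by rewrite /det; ring.
  by rewrite e1 e3 subrr !mulr0 addr0 => /eqP; rewrite subr_eq0 => /eqP.
have det2 : det ^+ 2 = 1 by rewrite -e2 eb ed -[LHS]mulr1 -e1; ring.
have [th [ct st]] := unit_circle_angle e1.
move/eqP: det2; rewrite sqrf_eq1 => /orP [] /eqP edet.
  exists th; left => k; rewrite mxapp_rotmx /mxapp -/a -/b -/c -/d ed eb edet ct st.
  by congr pair; ring.
exists (th + pi); right => k.
rewrite /= mxapp_rotmx mxapp_gamma1 /mxapp -/a -/b -/c -/d ed eb edet.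
by rewrite cosD sinD cospi sinpi ct st /=; congr pair; ring.
Qed.

End PlaneGeometry.

Lemma ptNK {R : realType} : involutive (@ptN R).
Proof. by case=> x y; rewrite /ptN /= !opprK. Qed.

Lemma ptN_inj {R : realType} : injective (@ptN R).
Proof. exact: inv_inj (@ptNK R). Qed.

Lemma onCircleN (R : realType) kap2 (k : pt R) : onCircle kap2 (ptN k) = onCircle kap2 k.
Proof. by rewrite /onCircle /ptN /= !sqrrN. Qed.

Lemma surj_injF (T : finType) (f : T -> T) : (forall y, exists x, f x = y) -> injective f.
Proof.
move=> fsurj x y; apply: (@image_injP _ _ f T) => //.
by apply/eqP/eq_card => z; have [w <-] := fsurj z; rewrite codom_f inE.
Qed.

Lemma prod_if_const (R : comPzSemiRingType) (I : finType) (P : pred I) (c : R) :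
  \prod_(x : I) (if P x then c else 0) = if [forall x, P x] then c ^+ #|I| else 0.
Proof.
case: ifP => [/forallP Pall|/negbT].
  by rewrite (eq_bigr (fun _ => c)) ?prodr_const // => x _; rewrite Pall.
by rewrite negb_forall => /existsP [x Px]; rewrite (bigD1 x) //= (negbTE Px) mul0r.
Qed.

Lemma sum_ffun_comp_inj (V : comPzSemiRingType) (p : nat) (I : finType)
    (f : {ffun 'I_p -> I}) (g : 'I_p -> 'I_p) (X : I -> V) : injective g ->
  \sum_(h : {ffun 'I_p -> I}) (\prod_(y < p) (f y == h (g y))%:R) * \prod_(x < p) X (h x)
  = \prod_(y < p) X (f y).
Proof.
move=> g_inj; have [g' gK g'K] := injF_bij g_inj.
pose h0 : {ffun 'I_p -> I} := [ffun x => f (g' x)].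
rewrite (bigD1 h0) //= [X in _ + X]big1 ?addr0 => [|h hh0].
  rewrite big1 ?mul1r => [|y _]; last by rewrite ffunE gK eqxx.
  by rewrite [RHS](reindex_inj (can_inj g'K)); apply: eq_bigr => x _; rewrite ffunE.
have [x hx] : exists x, h x != h0 x.
  apply/existsP; apply: contraNT hh0 => /existsPn hx.
  by apply/eqP/ffunP => x; apply/eqP/negPn.
rewrite (bigD1 (g' x)) //= g'K.
have -> : (f (g' x) == h x) = false by apply: contraNF hx => /eqP <-; rewrite ffunE.
by rewrite !mul0r.
Qed.

Lemma conjcM (R : rcfType) (x y : R[i]) : conjc (x * y) = conjc x * conjc y.
Proof. exact: rmorphM. Qed.

Section Phases.
Variable R : realType.
Local Notation C := (R[i]).

Lemma expiD (a b : R) : expi (a + b) = expi a * expi b.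
Proof.
rewrite /expi cosD sinD; apply/eqP; rewrite eq_complex /=.
by apply/andP; split; apply/eqP; ring.
Qed.

Lemma expi0 : expi (0 : R) = 1.
Proof. by rewrite /expi cos0 sin0. Qed.

Lemma conjc_expi (a : R) : conjc (expi a) = expi (- a).
Proof. by rewrite /expi cosN sinN. Qed.

Lemma expi_neq0 (a : R) : expi a != 0.
Proof.
apply/eqP => ea0; have := expiD a (- a).
by rewrite subrr expi0 ea0 mul0r => /eqP; rewrite oner_eq0.
Qed.

Lemma expiNpi : expi (- pi) = -1 :> C.
Proof.
by rewrite /expi cosN sinN cospi sinpi oppr0; apply/eqP; rewrite eq_complex /= oppr0 !eqxx.
Qed.

Lemma prod_expi (I : finType) (u : I -> R) :
  \prod_(x : I) expi (u x) = expi (\sum_(x : I) u x).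
Proof. by rewrite (big_morph (@expi R) expiD expi0). Qed.

Definition phase (s u : R) (k : pt R) : C := expi (- (s * k.1 + u * k.2)).

End Phases.

Section FourthRoots.
Variable R : realType.
Local Notation C := (R[i]).
Local Notation pt := (pt R).

Definition root4 (w : 'I_4) : C := 'i ^+ w.

Lemma expr_i4 : ('i : C) ^+ 4 = 1.
Proof. by rewrite (_ : 4%N = (2 * 2)%N) // exprM sqr_i sqrrN expr1n. Qed.

Lemma conjc_root4 w : conjc (root4 w) = root4 w ^+ 3.
Proof.
have conj_i : conjc ('i : C) = 'i ^+ 3.
  by rewrite exprS sqr_i mulrN1; apply/eqP; rewrite eq_complex /= oppr0 !eqxx.
rewrite /root4 -exprM mulnC exprM -conj_i; elim: (nat_of_ord w) => [|n IH].
  by rewrite !expr0 conjc1.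
by rewrite !exprS conjcM IH.
Qed.

Lemma expr_i_mod4 n : ('i : C) ^+ n = 'i ^+ (n %% 4).
Proof. by rewrite {1}(divn_eq n 4) exprD mulnC exprM expr_i4 expr1n mul1r. Qed.

Lemma sum_root4X (E : nat) : \sum_(w < 4) root4 w ^+ E = if (4 %| E)%N then 4 else 0.
Proof.
have -> : \sum_(w < 4) root4 w ^+ E = \sum_(w < 4) 'i ^+ ((w * (E %% 4)) %% 4).
  by apply: eq_bigr => w _; rewrite /root4 -exprM expr_i_mod4 modnMmr.
rewrite !big_ord_recr big_ord0 /dvdn /= add0r.
have : (E %% 4 < 4)%N by rewrite ltn_mod.
have i2 := sqr_i R; have i3 : ('i : C) ^+ 3 = - 'i by rewrite exprS i2 mulrN1.
by case: (E %% 4)%N => [|[|[|[|//]]]] _ /=; rewrite ?expr0 ?expr1 ?i2 ?i3; ring.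
Qed.

Section Packets.
Variable p : nat.
Implicit Types (t : p.-tuple pt) (xi beta : 'I_p -> C) (k : pt).

(* Repeated entries of [t] add up their amplitudes. *)
Definition packet t xi : efield R :=
  fun k => \sum_(x < p)
    ((k == tnth t x)%:R * xi x + (k == ptN (tnth t x))%:R * conjc (xi x)).

Definition packet_term t beta k (j : 'I_p * bool) : C :=
  if j.2 then (k == ptN (tnth t j.1))%:R * conjc (beta j.1)
  else (k == tnth t j.1)%:R * beta j.1.

Definition conj_exponent (b : bool) : nat := if b then 3 else 1.

Lemma packet_root4E t beta (w : 'I_p -> 'I_4) k :
  packet t (fun x => root4 (w x) * beta x) k =
  \sum_(j : 'I_p * bool) packet_term t beta k j * root4 (w j.1) ^+ conj_exponent j.2.
Proof.
rewrite /packet [RHS](eq_bigr (fun j => (fun x b =>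
  packet_term t beta k (x, b) * root4 (w x) ^+ conj_exponent b) j.1 j.2)); last by case.
rewrite -(pair_bigA _ (fun x b =>
  packet_term t beta k (x, b) * root4 (w x) ^+ conj_exponent b)) /=.
apply: eq_bigr => x _; rewrite big_bool /packet_term /conj_exponent /= expr1.
by rewrite conjcM conjc_root4; ring.
Qed.

Definition root4_exponent (h : {ffun 'I_p -> 'I_p * bool}) (x : 'I_p) : nat :=
  (\sum_(y < p | (h y).1 == x) conj_exponent (h y).2)%N.

Lemma prod_root4_regroup (h : {ffun 'I_p -> 'I_p * bool}) (w : 'I_p -> 'I_4) :
  \prod_(y < p) root4 (w (h y).1) ^+ conj_exponent (h y).2 =
  \prod_(x < p) root4 (w x) ^+ root4_exponent h x.
Proof.
rewrite (partition_big (fun y => (h y).1) xpredT) //=.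
by apply: eq_bigr => x _; rewrite -prodrXr; apply: eq_bigr => y /eqP ->.
Qed.

(* Averaging against [conj (root4 (w x))] keeps exactly the monomials in
   which each [x] occurs once, unconjugated. *)
Lemma root4_exponent_balanced (h : {ffun 'I_p -> 'I_p * bool}) :
  [forall x, 4 %| 3 + root4_exponent h x]%N =
  injectiveb (fun y => (h y).1) && [forall y, ~~ (h y).2].
Proof.
apply/idP/idP.
- move/forallP => bal.
  have h_surj x : exists y, (h y).1 = x.
    case: (pickP (fun y => (h y).1 == x)) => [y /eqP|none]; first by exists y.
    by move: (bal x); rewrite /root4_exponent big_pred0.
  have h_inj := surj_injF h_surj.
  apply/andP; split; first exact/injectiveP.
  apply/forallP => y; move: (bal (h y).1); rewrite /root4_exponent (big_pred1 y).
    by case: (h y).2.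
  by move=> y'; apply/eqP/eqP => [/h_inj|->].
- case/andP => /injectiveP h_inj /forallP unconj; apply/forallP => x.
  have /codomP [y ->] := injF_onto h_inj x.
  rewrite /root4_exponent (big_pred1 y); first by move: (unconj y); case: (h y).2.
  by move=> y'; apply/eqP/eqP => [/h_inj|->].
Qed.

Lemma sum_prod_root4 (h : {ffun 'I_p -> 'I_p * bool}) :
  \sum_(w : {ffun 'I_p -> 'I_4}) \prod_(x < p) root4 (w x) ^+ (3 + root4_exponent h x)
  = if [forall x, 4 %| 3 + root4_exponent h x]%N then 4 ^+ p else 0.
Proof.
rewrite -(bigA_distr_bigA (fun x u => root4 u ^+ (3 + root4_exponent h x))) /=.
under eq_bigr do rewrite sum_root4X.
by rewrite prod_if_const card_ord.
Qed.

Lemma root4_average_packet_balanced (a : 'I_p -> pt) t beta :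
  \sum_(w : {ffun 'I_p -> 'I_4}) (\prod_(x < p) root4 (w x) ^+ 3) *
     \prod_(y < p) packet t (fun x => root4 (w x) * beta x) (a y)
  = \sum_(h : {ffun 'I_p -> 'I_p * bool} | [forall x, 4 %| 3 + root4_exponent h x]%N)
      (\prod_(y < p) packet_term t beta (a y) (h y)) * 4 ^+ p.
Proof.
under eq_bigr => w _ do rewrite (eq_bigr _ (fun y _ => packet_root4E t beta w (a y))).
under eq_bigr do rewrite bigA_distr_bigA /= mulr_sumr.
rewrite exchange_big [RHS]big_mkcond /=; apply: eq_bigr => h _.
set T := \prod_(y < p) _.
rewrite -[in RHS](mulr0 T) -(fun_if ( *%R T)) -sum_prod_root4 mulr_sumr.
apply: eq_bigr => w _.
rewrite [X in _ * X]big_split prod_root4_regroup mulrCA -big_split; congr (_ * _).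
by apply: eq_bigr => x _; rewrite exprD.
Qed.

Lemma balanced_unconj (g : {ffun 'I_p -> 'I_p}) :
  [forall x, 4 %| 3 + root4_exponent [ffun y => (g y, false)] x]%N &&
  ([ffun y => ([ffun y0 => (g y0, false)] y).1] == g) = injectiveb g.
Proof.
rewrite root4_exponent_balanced; set hg := [ffun y => (g y, false)].
have -> : [ffun y => (hg y).1] == g by apply/eqP/ffunP => y; rewrite !ffunE.
have -> : [forall y, ~~ (hg y).2] by apply/forallP => y; rewrite ffunE.
by rewrite !andbT; apply: eq_injectiveb => y; rewrite ffunE.
Qed.

(* Coefficient extraction: the [root4]-average of a product of packet values
   isolates the multilinear part in the amplitudes [beta]. *)
Lemma root4_average_packet (a : 'I_p -> pt) t beta :
  \sum_(w : {ffun 'I_p -> 'I_4}) (\prod_(x < p) root4 (w x) ^+ 3) *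
     \prod_(y < p) packet t (fun x => root4 (w x) * beta x) (a y)
  = 4 ^+ p * (\prod_(x < p) beta x) *
    \sum_(g : {ffun 'I_p -> 'I_p} | injectiveb g) \prod_(y < p) (a y == tnth t (g y))%:R.
Proof.
rewrite root4_average_packet_balanced.
rewrite (reindex_onto (fun g : {ffun 'I_p -> 'I_p} => [ffun y => (g y, false)])
                      (fun h => [ffun y => (h y).1])) /=; last first.
  move=> h; rewrite root4_exponent_balanced => /andP [_ /forallP unconj].
  by apply/ffunP => y; rewrite !ffunE; move: (unconj y); case: (h y) => ? [].
rewrite mulr_sumr; apply: eq_big => g; rewrite balanced_unconj // => /injectiveP g_inj.
rewrite /packet_term mulrC -mulrA; congr (_ * _).
rewrite (eq_bigr (fun y => beta (g y) * (a y == tnth t (g y))%:R)) => [|y _].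
  by rewrite big_split [X in _ = X * _](reindex_inj g_inj).
by rewrite ffunE /= mulrC.
Qed.

Definition tuple_sum t : pt := (\sum_(x < p) (tnth t x).1, \sum_(x < p) (tnth t x).2).

Lemma actT_packet s u t xi :
  actT s u (packet t xi) = packet t (fun x => phase s u (tnth t x) * xi x).
Proof.
apply: funext => k; rewrite /actT /packet mulr_sumr; apply: eq_bigr => x _.
rewrite mulrDr; congr (_ + _).
  by case: eqP => [->|_]; rewrite ?mul1r ?mul0r ?mulr0.
case: eqP => [->|_]; last by rewrite !mul0r mulr0.
rewrite !mul1r conjcM conjc_expi /phase /ptN /=; congr (expi _ * _); ring.
Qed.

Lemma prod_phase s u t : \prod_(x < p) phase s u (tnth t x) = phase s u (tuple_sum t).
Proof.
by rewrite /phase prod_expi sumrN big_split /= -!mulr_sumr.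
Qed.

Lemma tuple_sum_map g t : tuple_sum (map_tuple (mxapp g) t) = mxapp g (tuple_sum t).
Proof.
by rewrite /tuple_sum /mxapp /=; congr pair; under eq_bigr do rewrite tnth_map /=;
  rewrite big_split /= -!mulr_sumr.
Qed.

Lemma packet_map g t xi : orthogonal2 g ->
  packet (map_tuple (mxapp g) t) xi = actO g (packet t xi).
Proof.
move=> og; apply: funext => k; rewrite /actO /packet; apply: eq_bigr => x _.
have moveV q : (k == mxapp g q) = (mxapp (invmx g) k == q).
  by apply/eqP/eqP => [->|<-]; rewrite ?mxappVK ?mxappKV.
by rewrite tnth_map -mxappN !moveV.
Qed.

End Packets.
End FourthRoots.

Arguments root4 {R} w.

Section Monomials.
Variables (V : comPzSemiRingType) (n p : nat).
Implicit Types (m : {ffun 'I_n.+1 -> 'I_p.+1}) (Y : 'I_n.+1 -> V).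

Definition monomial_word m : seq 'I_n.+1 := flatten [seq nseq (m i) i | i <- enum 'I_n.+1].

Definition monomial_ffun m : {ffun 'I_p -> 'I_n.+1} :=
  [ffun y : 'I_p => nth ord0 (monomial_word m) y].

Lemma size_monomial_word m : size (monomial_word m) = (\sum_(i < n.+1) (m i : nat))%N.
Proof.
rewrite /monomial_word size_flatten /shape -map_comp sumnE big_map big_enum /=.
by apply: eq_bigr => i _; rewrite size_nseq.
Qed.

Lemma prod_monomial_word m Y :
  \prod_(i <- monomial_word m) Y i = \prod_(i < n.+1) Y i ^+ m i.
Proof.
rewrite /monomial_word big_flatten big_map big_enum /=; apply: eq_bigr => i _.
by rewrite big_nseq iter_mulr_1.
Qed.

Lemma prod_monomial_ffun m Y : (\sum_(i < n.+1) (m i : nat))%N = p ->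
  \prod_(y < p) Y (monomial_ffun m y) = \prod_(i < n.+1) Y i ^+ m i.
Proof.
move=> deg_m; rewrite -prod_monomial_word (big_nth ord0) size_monomial_word deg_m.
by rewrite big_mkord; apply: eq_bigr => y _; rewrite ffunE.
Qed.

Lemma homog_sum_ffun (c : {ffun 'I_n.+1 -> 'I_p.+1} -> V) Y :
  \sum_(m : {ffun 'I_n.+1 -> 'I_p.+1} | (\sum_(i < n.+1) (m i : nat))%N == p)
     c m * \prod_(i < n.+1) Y i ^+ m i
  = \sum_(f : {ffun 'I_p -> 'I_n.+1})
      (\sum_(m : {ffun 'I_n.+1 -> 'I_p.+1} |
          ((\sum_(i < n.+1) (m i : nat))%N == p) && (monomial_ffun m == f)) c m) *
      \prod_(y < p) Y (f y).
Proof.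
rewrite (partition_big monomial_ffun xpredT) //=; apply: eq_bigr => f _.
rewrite mulr_suml; apply: eq_bigr => m /andP [/eqP deg_m /eqP <-].
by rewrite prod_monomial_ffun.
Qed.

End Monomials.

Section WaveVectors.
Variable R : realType.
Variables l1 n1 l2 n2 : nat.
Hypotheses (hl : (l2 < l1)%N) (hn1 : (0 < n1 < l1)%N) (hn2 : (0 < n2 < l2)%N)
  (hk : (l1 ^ 2 + n1 ^ 2 = l2 ^ 2 + n2 ^ 2)%N).
Local Notation pt := (pt R).
Local Notation wv := (wv R l1 n1 l2 n2).
Local Notation inAt := (inAt l1 n1 l2 n2).
Local Notation inEc := (@inEc R l1 n1 l2 n2).
Local Notation emb := (@embEc R l1 n1 l2 n2).
Local Notation crd := (@coordEc R l1 n1 l2 n2).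
Local Notation kap2 := ((l1 ^ 2 + n1 ^ 2)%N%:R : R).
Implicit Types (k : pt).

Definition wv_int (i : 'I_8) : int * int :=
  match val i with
  | 0 => (Posz l1, Posz n1) | 1 => (Posz l1, - Posz n1)
  | 2 => (Posz n1, Posz l1) | 3 => (Posz n1, - Posz l1)
  | 4 => (Posz l2, Posz n2) | 5 => (Posz l2, - Posz n2)
  | 6 => (Posz n2, Posz l2) | _ => (Posz n2, - Posz l2) end.

Lemma wv_intE i : wv i = ((wv_int i).1%:~R, (wv_int i).2%:~R).
Proof. by case: i => [[|[|[|[|[|[|[|[|//]]]]]]]] ?]; rewrite /wv /wv_int /= ?intrN. Qed.

Lemma wv_int_inj : injective wv_int.
Proof.
by move=> [[|[|[|[|[|[|[|[|//]]]]]]]] ?] [[|[|[|[|[|[|[|[|//]]]]]]]] ?] /= e;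
  apply: val_inj => //=; move: e; rewrite /wv_int /= => -[]; lia.
Qed.

Lemma wv_int_gt0 i : (0 < (wv_int i).1)%R.
Proof. by case: i => [[|[|[|[|[|[|[|[|//]]]]]]]] ?]; rewrite /wv_int /=; lia. Qed.

Lemma wv_int_norm2 i :
  ((wv_int i).1 ^+ 2 + (wv_int i).2 ^+ 2)%R = Posz (l1 ^ 2 + n1 ^ 2).
Proof. by case: i => [[|[|[|[|[|[|[|[|//]]]]]]]] ?]; rewrite /wv_int /=; nia. Qed.

Lemma wv_inj : injective wv.
Proof.
move=> i j; rewrite !wv_intE => -[/intr_inj e1 /intr_inj e2]; apply: wv_int_inj.
by move: e1 e2; case: (wv_int i) => ? ?; case: (wv_int j) => ? ? /= -> ->.
Qed.

(* The wave vectors lie in an open half-plane, so no [- q] is a wave vector. *)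
Lemma wv_neq_ptN i j : wv i != ptN (wv j).
Proof.
apply/eqP; rewrite !wv_intE /ptN /= -intrN => -[/intr_inj e1 _].
by have := wv_int_gt0 i; have := wv_int_gt0 j; rewrite e1; lia.
Qed.

Lemma onCircle_wv i : onCircle kap2 (wv i).
Proof. by rewrite wv_intE /onCircle /= -!rmorphXn -rmorphD /= wv_int_norm2. Qed.

Definition Apt (i : 'I_16) : pt :=
  if (i < 8)%N then wv (inord i) else ptN (wv (inord (i - 8))).

Lemma Apt_inj : injective Apt.
Proof.
move=> i j; rewrite /Apt; have := ltn_ord i; have := ltn_ord j.
case: ifP => hi; case: ifP => hj lj li.
- by move/wv_inj/(congr1 val); rewrite /= !inordK // => /val_inj.
- by move=> e; move: (wv_neq_ptN (inord i) (inord (j - 8))); rewrite e eqxx.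
- by move=> e; move: (wv_neq_ptN (inord j) (inord (i - 8))); rewrite e eqxx.
- move/ptN_inj/wv_inj/(congr1 val); rewrite /= !inordK; try lia.
  by move=> e; apply: val_inj => /=; lia.
Qed.

Lemma inAtP k : reflect (exists i : 'I_16, k = Apt i) (inAt k).
Proof.
apply: (iffP existsP) => [[i /orP[] /eqP ->]|[i ->]].
- exists (inord i); rewrite /Apt inordK ?ltn_ord ?(ltn_trans (ltn_ord i)) //.
  by congr wv; apply: val_inj; rewrite /= inordK.
- have i8 : (i + 8 < 16)%N by have := ltn_ord i; lia.
  exists (inord (i + 8)); rewrite /Apt inordK // ifN; last by lia.
  by congr (ptN (wv _)); apply: val_inj; rewrite /= inordK addnK.
- by rewrite /Apt; case: ifP => _; [exists (inord i)|exists (inord (i - 8))];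
    rewrite eqxx ?orbT.
Qed.

Lemma inAt_Apt (i : 'I_16) : inAt (Apt i).
Proof. by apply/inAtP; exists i. Qed.

Lemma inAtN k : inAt (ptN k) = inAt k.
Proof.
suff inAtN_imp k' : inAt k' -> inAt (ptN k').
  by apply/idP/idP => /inAtN_imp //; rewrite ptNK.
move=> /existsP [i /orP[] /eqP ->]; apply/existsP; exists i.
  by rewrite eqxx orbT.
by rewrite ptNK eqxx.
Qed.

Lemma onCircle_inAt k : inAt k -> onCircle kap2 k.
Proof.
by case/inAtP => i ->; rewrite /Apt; case: ifP => _; rewrite ?onCircleN onCircle_wv.
Qed.

Lemma Apt_onCircle (i : 'I_16) : onCircle kap2 (Apt i).
Proof. exact/onCircle_inAt/inAt_Apt. Qed.

(* [gamma1] swaps each [q_{2m+1}, q_{2m+2}] and [p_{2m+1}, p_{2m+2}] up to sign. *)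
Definition gamma1_partner (i : 'I_8) : 'I_8 := inord (if odd i then i.-1 else i.+1).

Lemma mxapp_gamma1_wv i : mxapp (gamma1 R) (wv i) = ptN (wv (gamma1_partner i)).
Proof.
rewrite mxapp_gamma1 /gamma1_partner /ptN.
by case: i => [[|[|[|[|[|[|[|[|//]]]]]]]] ?]; rewrite /wv /= inordK //= ?opprK.
Qed.

Lemma inAt_gamma1 k : inAt k -> inAt (mxapp (gamma1 R) k).
Proof.
move=> /existsP [i /orP[] /eqP ->]; apply/existsP; exists (gamma1_partner i).
  by rewrite mxapp_gamma1_wv eqxx orbT.
by rewrite mxappN mxapp_gamma1_wv ptNK eqxx.
Qed.

Lemma embEc_wv z j : emb z (wv j) = z 0 j.
Proof.
rewrite /embEc (bigD1 j) //= eqxx (negbTE (wv_neq_ptN _ _)) mul1r mul0r addr0.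
rewrite big1 ?addr0 // => i ij.
rewrite (negbTE (wv_neq_ptN _ _)) mul0r addr0 (inj_eq wv_inj).
by rewrite eq_sym (negbTE ij) mul0r.
Qed.

Lemma embEc_wvN z j : emb z (ptN (wv j)) = conjc (z 0 j).
Proof.
rewrite /embEc (bigD1 j) //= eqxx eq_sym (negbTE (wv_neq_ptN _ _)) mul1r mul0r add0r.
rewrite big1 ?addr0 // => i ij.
rewrite eq_sym (negbTE (wv_neq_ptN _ _)) (inj_eq ptN_inj) (inj_eq wv_inj).
by rewrite eq_sym (negbTE ij) !mul0r addr0.
Qed.

Lemma embEc_out z k : ~~ inAt k -> emb z k = 0.
Proof.
move=> kA; rewrite /embEc big1 // => i _.
have -> : (k == wv i) = false.
  by apply: contraNF kA => /eqP ->; apply/existsP; exists i; rewrite eqxx.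
have -> : (k == ptN (wv i)) = false.
  by apply: contraNF kA => /eqP ->; apply/existsP; exists i; rewrite eqxx orbT.
by rewrite !mul0r addr0.
Qed.

Lemma inAt_cases (P : pt -> Prop) :
  (forall j, P (wv j)) -> (forall j, P (ptN (wv j))) -> (forall k, ~~ inAt k -> P k) ->
  forall k, P k.
Proof.
move=> Pwv PwvN Pout k; case kA: (inAt k); last by apply: Pout; rewrite kA.
by move/existsP: kA => [i /orP[] /eqP ->].
Qed.

Lemma embEc_inEc z : inEc (emb z).
Proof.
split; first by move=> k; apply: contraR => /embEc_out ->.
apply: inAt_cases => [j|j|k kA].
- by rewrite embEc_wv embEc_wvN.
- by rewrite ptNK embEc_wv embEc_wvN conjcK.
- by rewrite !embEc_out ?inAtN // rmorph0.
Qed.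

Lemma coordEcK Psi : inEc Psi -> emb (crd Psi) = Psi.
Proof.
move=> [Psi_supp Psi_conj]; apply: funext; apply: inAt_cases => [j|j|k kA].
- by rewrite embEc_wv mxE.
- by rewrite embEc_wvN mxE Psi_conj.
- by rewrite embEc_out //; apply/esym/eqP; apply: contraR kA; apply: Psi_supp.
Qed.

Lemma inEc_actO g Psi : orthogonal2 g ->
  {homo mxapp g : k / inAt k} -> inEc Psi -> inEc (actO g Psi).
Proof.
move=> og gA [Psi_supp Psi_conj]; split.
  by move=> k /Psi_supp /gA; rewrite mxappKV.
by move=> k; rewrite /actO mxappN Psi_conj.
Qed.

Lemma inEc_finsupp Phi : inEc Phi -> finsupp kap2 Phi.
Proof.
move=> [Phi_supp _]; exists (map Apt (enum 'I_16)); split.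
- by rewrite (map_inj_uniq Apt_inj) enum_uniq.
- by apply/allP => x /mapP [i _ ->]; apply: Apt_onCircle.
- by move=> x /Phi_supp /inAtP [i ->]; rewrite map_f ?mem_enum.
Qed.

Local Notation C := (R[i]).

Lemma coordEc_Apt Psi (i : 'I_16) : inEc Psi ->
  (if (i < 8)%N then crd Psi 0 (inord i) else conjc (crd Psi 0 (inord (i - 8))))
  = Psi (Apt i).
Proof. by case=> _ Psi_conj; rewrite /Apt; case: ifP => _; rewrite !mxE ?Psi_conj. Qed.

Definition Anode (b : bool) (i : 'I_16) : pt := if b then ptN (Apt i) else Apt i.

Lemma Anode_inj b : injective (Anode b).
Proof. by case: b => i j /=; [move/ptN_inj|]; apply: Apt_inj. Qed.

Lemma inAt_Anode b (i : 'I_16) : inAt (Anode b i).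
Proof. by case: b; rewrite /Anode ?inAtN inAt_Apt. Qed.

Lemma Anode_onto b k : inAt k -> exists i : 'I_16, Anode b i = k.
Proof.
case: b => [|/inAtP [i ->]]; last by exists i.
by rewrite -inAtN => /inAtP [i ki]; exists i; rewrite /Anode -ki ptNK.
Qed.

Section Extension.
Variables (p : nat) (Ft : 'rV[C]_8 -> 'rV[C]_8).
Hypothesis hpoly : homogPoly p Ft.
Implicit Types (t : p.-tuple pt) (Psi Phi : efield R).

Definition Fcomp k Psi : C := emb (Ft (crd Psi)) k.

(* At [k = - q] the component is the conjugate of a polynomial in the
   [Psi (Apt i)], hence a polynomial in the [Psi (- Apt i)]. *)
Lemma Fcomp_poly k : exists bd : bool * ({ffun 'I_p -> 'I_16} -> C),
  forall Psi, inEc Psi ->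
    Fcomp k Psi =
    \sum_(f : {ffun 'I_p -> 'I_16}) bd.2 f * \prod_(y < p) Psi (Anode bd.1 (f y)).
Proof.
have [c Ft_poly] := hpoly.
pose d j f := \sum_(m : {ffun 'I_16 -> 'I_p.+1} |
                ((\sum_(i < 16) (m i : nat))%N == p) && (monomial_ffun m == f)) c j m.
have FtE Psi j : inEc Psi ->
    Ft (crd Psi) 0 j =
    \sum_(f : {ffun 'I_p -> 'I_16}) d j f * \prod_(y < p) Psi (Apt (f y)).
  move=> PsiEc; rewrite Ft_poly /d -(homog_sum_ffun (c j) (fun i => Psi (Apt i))).
  apply: eq_bigr => m _.
  by congr (_ * _); apply: eq_bigr => i _; rewrite coordEc_Apt.
case kA: (inAt k); last first.
  exists (false, fun _ => 0) => Psi _; rewrite /Fcomp embEc_out ?kA //.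
  by rewrite big1 // => f _; rewrite mul0r.
case/existsP: kA => j /orP [] /eqP ->.
  by exists (false, d j) => Psi PsiEc; rewrite /Fcomp embEc_wv FtE.
exists (true, fun f => conjc (d j f)) => Psi PsiEc.
rewrite /Fcomp embEc_wvN FtE // rmorph_sum; apply: eq_bigr => f _.
rewrite rmorphM rmorph_prod; congr (_ * _); apply: eq_bigr => y _.
by case: PsiEc => _ ->.
Qed.

Definition Fcomp_node_sign k : bool := (proj1_sig (cid (Fcomp_poly k))).1.
Definition Fcomp_coef k : {ffun 'I_p -> 'I_16} -> C := (proj1_sig (cid (Fcomp_poly k))).2.
Local Notation node k := (Anode (Fcomp_node_sign k)).

Lemma FcompE k Psi : inEc Psi ->
  Fcomp k Psi =
  \sum_(f : {ffun 'I_p -> 'I_16}) Fcomp_coef k f * \prod_(y < p) Psi (node k (f y)).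
Proof. exact: (proj2_sig (cid (Fcomp_poly k))). Qed.

Definition tupleA t := forall x, inAt (tnth t x).

Lemma packet_inEc t xi : tupleA t -> inEc (packet t xi).
Proof.
move=> tA; split=> k.
  apply: contraR => kA; rewrite /packet big1 // => x _.
  have -> : (k == tnth t x) = false by apply: contraNF kA => /eqP ->.
  have -> : (k == ptN (tnth t x)) = false by apply: contraNF kA => /eqP ->; rewrite inAtN.
  by rewrite !mul0r addr0.
rewrite /packet rmorph_sum; apply: eq_bigr => x _.
rewrite rmorphD !rmorphM /= conjcK !conjc_nat addrC (inj_eq ptN_inj).
by rewrite -[in ptN k == _](ptNK (tnth t x)) (inj_eq ptN_inj).
Qed.

Definition nperm : nat := #|[pred g : {ffun 'I_p -> 'I_p} | injectiveb g]|.

Lemma nperm_neq0 : (nperm%:R : C) != 0.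
Proof.
rewrite pnatr_eq0 -lt0n; apply/card_gt0P; exists [ffun y => y].
by rewrite inE; apply/injectiveP => x y; rewrite !ffunE.
Qed.

(* The coefficient of the monomial [Psi t_1 ... Psi t_p] in [Fcomp k],
   symmetrized over the orderings of [t]. *)
Definition sym_coef k t : C :=
  \sum_(f : {ffun 'I_p -> 'I_16}) Fcomp_coef k f *
     \sum_(g : {ffun 'I_p -> 'I_p} | injectiveb g)
        \prod_(y < p) (node k (f y) == tnth t (g y))%:R.

Lemma root4_average_Fcomp k t (beta : 'I_p -> C) : tupleA t ->
  \sum_(w : {ffun 'I_p -> 'I_4}) (\prod_(x < p) root4 (w x) ^+ 3) *
     Fcomp k (packet t (fun x => root4 (w x) * beta x))
  = 4 ^+ p * (\prod_(x < p) beta x) * sym_coef k t.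
Proof.
move=> tA.
under eq_bigr => w _ do rewrite (FcompE _ (packet_inEc _ tA)) mulr_sumr.
rewrite exchange_big /= /sym_coef mulr_sumr; apply: eq_bigr => f _.
rewrite mulrCA -(root4_average_packet (fun y => node k (f y))) mulr_sumr.
by apply: eq_bigr => w _; rewrite mulrCA.
Qed.

(* [sym_coef] read off from [Fcomp] alone, which makes its symmetries visible. *)
Definition coef_extract k t : C :=
  (\sum_(w : {ffun 'I_p -> 'I_4}) (\prod_(x < p) root4 (w x) ^+ 3) *
      Fcomp k (packet t (fun x => root4 (w x))))
  / (4 ^+ p * nperm%:R).

Lemma coef_extractE k t : tupleA t -> coef_extract k t = sym_coef k t / nperm%:R.
Proof.
move=> tA; have drop1 (w : {ffun 'I_p -> 'I_4}) :
    packet t (fun x => root4 (w x)) = packet t (fun x => root4 (w x) * 1).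
  by congr packet; apply: funext => x; rewrite mulr1.
rewrite /coef_extract; under eq_bigr do rewrite drop1.
rewrite root4_average_Fcomp // big1 // mulr1.
have four_neq0 : (4 : C) ^+ p != 0 by rewrite expf_neq0 // pnatr_eq0.
by field; rewrite four_neq0 nperm_neq0.
Qed.

Lemma inEc_actT s u Phi : inEc Phi -> inEc (actT s u Phi).
Proof.
move=> [Phi_supp Phi_conj]; split=> k; rewrite /actT.
  by move=> ePhi; apply: Phi_supp; apply: contraNneq ePhi => ->; rewrite mulr0.
rewrite Phi_conj conjcM conjc_expi /ptN /=; congr (expi _ * _); ring.
Qed.

 
Hypothesis heq : Gamma_equivariant l1 n1 l2 n2 Ft.

Lemma Fcomp_actT s u Psi k : inEc Psi -> Fcomp k (actT s u Psi) = phase s u k * Fcomp k Psi.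
Proof.
move=> PsiEc; have [_ [_ FtT]] := heq.
have := FtT s u (crd Psi); rewrite /Fcomp coordEcK // => ->.
by rewrite coordEcK //; apply/inEc_actT/embEc_inEc.
Qed.

Lemma sym_coef_phase s u k t : tupleA t ->
  phase s u k * sym_coef k t = phase s u (tuple_sum t) * sym_coef k t.
Proof.
move=> tA; have four_neq0 : (4 : C) ^+ p != 0 by rewrite expf_neq0 // pnatr_eq0.
have avg1 := root4_average_Fcomp k (fun _ => 1) tA.
have avg_phase := root4_average_Fcomp k (fun x => phase s u (tnth t x)) tA.
rewrite big1_eq mulr1 in avg1; rewrite prod_phase in avg_phase.
apply: (mulfI four_neq0); rewrite mulrA [RHS]mulrA [_ * phase _ _ _]mulrC -avg_phase.
rewrite -mulrA -avg1 mulr_sumr; apply: eq_bigr => w _.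
rewrite mulrCA -Fcomp_actT; last exact: packet_inEc.
rewrite actT_packet; congr (_ * Fcomp k (packet t _)).
by apply: funext => x; rewrite mulr1 mulrC.
Qed.

Lemma sym_coef_supp k t : tupleA t -> sym_coef k t != 0 -> tuple_sum t = k.
Proof.
move=> tA; apply: contraNeq => sum_neq; apply/eqP.
set d1 := (tuple_sum t).1 - k.1; set d2 := (tuple_sum t).2 - k.2.
have dnorm_neq0 : d1 ^+ 2 + d2 ^+ 2 != 0.
  apply: contra sum_neq; rewrite paddr_eq0 ?sqr_ge0 // !sqrf_eq0 !subr_eq0.
  by case/andP => /eqP e1 /eqP e2; apply/eqP/injective_projections.
(* A translation by [pi d / |d|^2] gives the two phases opposite signs. *)
pose s := pi * d1 / (d1 ^+ 2 + d2 ^+ 2); pose u := pi * d2 / (d1 ^+ 2 + d2 ^+ 2).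
have phase_sum : phase s u (tuple_sum t) = - phase s u k.
  have pi_shift : s * d1 + u * d2 = pi by rewrite /s /u; field.
  rewrite -mulN1r -expiNpi /phase -expiD -pi_shift; congr expi.
  rewrite -(subrK k.1 (tuple_sum t).1) -(subrK k.2 (tuple_sum t).2) -/d1 -/d2.
  by ring.
have := sym_coef_phase s u k tA; rewrite phase_sum mulNr => /eqP.
by rewrite -addr_eq0 -mulrDl -mulr2n mulf_eq0 mulrn_eq0 (negbTE (expi_neq0 _)) => /eqP.
Qed.

Lemma Fcomp_packet_gamma1 k t xi : tupleA t ->
  Fcomp (mxapp (gamma1 R) k) (packet (map_tuple (mxapp (gamma1 R)) t) xi) =
  Fcomp k (packet t xi).
Proof.
move=> tA; have PEc := packet_inEc xi tA; have [Ftg1 _] := heq.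
have := Ftg1 (crd (packet t xi)); rewrite coordEcK // => Ft_g1.
have og1 := orthogonal2_gamma1 R.
rewrite /Fcomp (packet_map _ _ og1) Ft_g1 coordEcK; first by rewrite /actO mxappVK.
exact/inEc_actO/embEc_inEc/inAt_gamma1.
Qed.

Hypothesis hrot : forall (th : R) (Phi : efield R),
  inEc Phi -> inEc (actO (rotmx th) Phi) ->
  eqEk kap2 (actO (rotmx th) (emb (Ft (crd Phi)))) (emb (Ft (crd (actO (rotmx th) Phi)))).

Lemma Fcomp_packet_rotmx th k t xi : onCircle kap2 k ->
  tupleA t -> tupleA (map_tuple (mxapp (rotmx th)) t) ->
  Fcomp (mxapp (rotmx th) k) (packet (map_tuple (mxapp (rotmx th)) t) xi) =
  Fcomp k (packet t xi).
Proof.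
move=> kC tA rtA; have ort := orthogonal2_rotmx th.
have rPEc : inEc (actO (rotmx th) (packet t xi)).
  by rewrite -packet_map //; exact: packet_inEc.
have := @hrot th _ (packet_inEc xi tA) rPEc (mxapp (rotmx th) k).
rewrite onCircle_mxapp // => /(_ kC); rewrite /actO mxappVK // => Ft_rot.
by rewrite /Fcomp packet_map // -Ft_rot.
Qed.

Lemma coef_extract_orth g k t : orthogonal2 g -> onCircle kap2 k ->
  tupleA t -> tupleA (map_tuple (mxapp g) t) ->
  coef_extract (mxapp g k) (map_tuple (mxapp g) t) = coef_extract k t.
Proof.
move=> og kC tA gtA.
suff Fcomp_g xi :
    Fcomp (mxapp g k) (packet (map_tuple (mxapp g) t) xi) = Fcomp k (packet t xi).
  by rewrite /coef_extract; under eq_bigr do rewrite Fcomp_g.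
have [th [g_rot|g_refl]] := orthogonal2_rot_refl og.
  have -> : map_tuple (mxapp g) t = map_tuple (mxapp (rotmx th)) t.
    by apply: eq_from_tnth => x; rewrite !tnth_map g_rot.
  rewrite g_rot Fcomp_packet_rotmx // => x.
  by rewrite tnth_map -g_rot -tnth_map; apply: gtA.
have -> : map_tuple (mxapp g) t =
          map_tuple (mxapp (rotmx th)) (map_tuple (mxapp (gamma1 R)) t).
  by apply: eq_from_tnth => x; rewrite !tnth_map g_refl.
rewrite g_refl /= Fcomp_packet_rotmx ?Fcomp_packet_gamma1 //.
- by rewrite onCircle_mxapp //; apply: orthogonal2_gamma1.
- by move=> x; rewrite tnth_map; apply: inAt_gamma1.
- by move=> x; rewrite !tnth_map -[mxapp _ (mxapp _ _)]g_refl -tnth_map; apply: gtA.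
Qed.
Definition seq_tuple (u : seq pt) : p.-tuple pt := [tuple nth (0, 0) u i | i < p].

Definition congruent_At t := exists g, orthogonal2 g /\ tupleA (map_tuple (mxapp g) t).

Lemma map_tupleM g h t :
  map_tuple (mxapp g) (map_tuple (mxapp h) t) = map_tuple (mxapp (g *m h)) t.
Proof. by apply: eq_from_tnth => x; rewrite !tnth_map mxappM. Qed.

Lemma congruent_At_map g t : orthogonal2 g ->
  congruent_At (map_tuple (mxapp g) t) <-> congruent_At t.
Proof.
move=> og; split=> [[h [oh htA]]|[h [oh htA]]].
  by exists (h *m g); rewrite -map_tupleM; split=> //; apply: orthogonal2M.
exists (h *m invmx g); split; first exact/orthogonal2M/orthogonal2V.
by rewrite map_tupleM -mulmxA orthogonal2_invmx // og mulmx1.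
Qed.

Lemma coef_extract_transport g h k t : orthogonal2 g -> orthogonal2 h ->
  onCircle kap2 k -> tupleA (map_tuple (mxapp g) t) -> tupleA (map_tuple (mxapp h) t) ->
  coef_extract (mxapp g k) (map_tuple (mxapp g) t) =
  coef_extract (mxapp h k) (map_tuple (mxapp h) t).
Proof.
move=> og oh kC gtA htA; pose m := g *m invmx h.
have om : orthogonal2 m by apply/orthogonal2M/orthogonal2V.
have m_h q : mxapp m (mxapp h q) = mxapp g q by rewrite mxappM mxappVK.
have m_ht : map_tuple (mxapp m) (map_tuple (mxapp h) t) = map_tuple (mxapp g) t.
  by apply: eq_from_tnth => x; rewrite !tnth_map m_h.
have hkC : onCircle kap2 (mxapp h k) by rewrite onCircle_mxapp.
have mhtA : tupleA (map_tuple (mxapp m) (map_tuple (mxapp h) t)) by rewrite m_ht.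
by rewrite -(coef_extract_orth om hkC htA mhtA) m_h m_ht.
Qed.

Definition kernel k t : C :=
  if tuple_sum t == k then
    if pselect (congruent_At t) is left gA
    then coef_extract (mxapp (proj1_sig (cid gA)) k)
                      (map_tuple (mxapp (proj1_sig (cid gA))) t)
    else 0
  else 0.

Lemma kernel_supp k t : kernel k t != 0 -> tuple_sum t = k.
Proof. by rewrite /kernel; case: ifP => [/eqP //|_]; rewrite eqxx. Qed.

Lemma kernelE k t : onCircle kap2 k -> tupleA t -> kernel k t = sym_coef k t / nperm%:R.
Proof.
move=> kC tA; rewrite /kernel; case: ifP => [_|/negbT sum_neq].
  case: pselect => [gA|[]].
    by case: (proj2_sig (cid gA)) => og gtA; rewrite coef_extract_orth // coef_extractE.
  by exists 1%:M; split; [exact: orthogonal2_1|move=> x; rewrite tnth_map mxapp1].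
apply/esym/eqP; rewrite mulf_eq0 invr_eq0 (negbTE nperm_neq0) orbF.
by apply: contraNT sum_neq => /(sym_coef_supp tA)/eqP.
Qed.

Lemma kernel_orth g k t : orthogonal2 g -> onCircle kap2 k ->
  kernel (mxapp g k) (map_tuple (mxapp g) t) = kernel k t.
Proof.
move=> og kC; rewrite /kernel tuple_sum_map (inj_eq (mxapp_inj og)).
case: ifP => // _; have gAE := congruent_At_map t og.
case: pselect => [gA1|no1]; case: pselect => [gA2|no2] //.
- case: (proj2_sig (cid gA1)) => og1 gtA1; case: (proj2_sig (cid gA2)) => og2 gtA2.
  rewrite -mxappM; rewrite map_tupleM in gtA1 *.
  by apply: coef_extract_transport => //; apply: orthogonal2M.
- by case: no2; apply/gAE.
- by case: no1; apply/gAE.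
Qed.

Definition kernel_word (a : efield R) k (u : seq pt) : C :=
  kernel k (seq_tuple u) * \prod_(y <- u) a y.

(* Well defined thanks to [FextE] below; the junk value off [finsupp] is 0. *)
Definition Fext (a : efield R) k : C :=
  if pselect (finsupp kap2 a) is left aS
  then wordsum (proj1_sig (cid aS)) p (kernel_word a k) else 0.

Lemma FextE a s k : fsupp kap2 a s -> Fext a k = wordsum s p (kernel_word a k).
Proof.
move=> aSs; rewrite /Fext; case: pselect => [aS|[]]; last by exists s.
case: (proj2_sig (cid aS)) => u0 _ supp0; case: aSs => u1 _ supp1.
apply: (eq_wordsum_support (good := fun x => a x != 0)) => // u.
rewrite -has_predC => u_bad; apply/eqP.
rewrite /kernel_word mulf_eq0 prodf_seq_eq0; apply/orP; right.
by apply: sub_has u_bad => x /negPn.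
Qed.

Lemma seq_tuple_map g (u : seq pt) :
  seq_tuple (map (mxapp g) u) = map_tuple (mxapp g) (seq_tuple u).
Proof.
apply: eq_from_tnth => i; rewrite /seq_tuple !tnth_map !tnth_ord_tuple.
have [iu|ui] := ltnP i (size u); first by rewrite (nth_map (0, 0)).
by rewrite !nth_default ?size_map // /mxapp /= !mulr0 addr0.
Qed.

Lemma seq_tuple_enum (f : 'I_p -> pt) : seq_tuple (map f (enum 'I_p)) = [tuple f i | i < p].
Proof.
apply: eq_from_tnth => i; rewrite /seq_tuple !tnth_map !tnth_ord_tuple.
by rewrite (nth_map i) ?size_enum_ord // nth_ord_enum.
Qed.

Lemma Fext_poly : isPolyVF kap2 p Fext.
Proof.
exists kernel => a s aSs k _; rewrite (FextE k aSs) -(sum_ffun_nth_wordsum (0, 0)).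
by apply: eq_bigr => f _; rewrite /kernel_word seq_tuple_enum big_map_enum_ord.
Qed.

Lemma Fext_actO g a s k : orthogonal2 g -> fsupp kap2 a s -> onCircle kap2 k ->
  Fext (actO g a) k = Fext a (mxapp (invmx g) k).
Proof.
move=> og [s_uniq sC a_supp] kC.
have gaS : fsupp kap2 (actO g a) (map (mxapp g) s).
  split; first by rewrite (map_inj_uniq (mxapp_inj og)).
    by rewrite all_map; apply/allP => x xs /=; rewrite onCircle_mxapp // (allP sC).
  by move=> x /a_supp xs; apply/mapP; exists (mxapp (invmx g) x); rewrite ?mxappKV.
rewrite (FextE _ gaS) (FextE _ (And3 s_uniq sC a_supp)) wordsum_map; congr wordsum.
apply: funext => u; rewrite /kernel_word seq_tuple_map big_map.
have kC' : onCircle kap2 (mxapp (invmx g) k).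
  by rewrite onCircle_mxapp //; apply: orthogonal2V.
rewrite -[in LHS](mxappKV og k) (kernel_orth _ og kC').
by congr (_ * _); apply: eq_bigr => y _; rewrite /actO mxappVK.
Qed.

Lemma big_seq_tuple (V : Type) (idx : V) (op : V -> V -> V) (u : seq pt) (F : pt -> V) :
  size u = p -> \big[op/idx]_(y <- u) F y = \big[op/idx]_(x < p) F (tnth (seq_tuple u) x).
Proof.
move=> su; rewrite (big_nth (0, 0)) su big_mkord; apply: eq_bigr => x _.
by rewrite tnth_map tnth_ord_tuple.
Qed.

Lemma Fext_actT s u a k : finsupp kap2 a -> Fext (actT s u a) k = phase s u k * Fext a k.
Proof.
move=> [r aSr].
have taS : fsupp kap2 (actT s u a) r.
  case: aSr => r_uniq rC a_supp; split => // x tax0; apply: a_supp.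
  by apply: contraNneq tax0 => ax0; rewrite /actT ax0 mulr0.
rewrite (FextE k taS) (FextE k aSr); apply: wordsum_scale => v sv.
rewrite /kernel_word; have [->|kv] := eqVneq (kernel k (seq_tuple v)) 0.
  by rewrite !mul0r mulr0.
rewrite big_split /= mulrCA; congr (_ * _).
by rewrite -(kernel_supp kv) -prod_phase big_seq_tuple.
Qed.

Lemma Fext_E2equivariant : E2equivariant kap2 Fext.
Proof.
move=> a [r aSr]; split=> [g og k kC|s u k _].
  by rewrite (Fext_actO og aSr kC).
by rewrite Fext_actT //; exists r.
Qed.

Lemma tupleA_node k (h : {ffun 'I_p -> 'I_16}) : tupleA [tuple node k (h x) | x < p].
Proof. by move=> x; rewrite tnth_map; apply: inAt_Anode. Qed.

Lemma FextE_node Phi k : inEc Phi ->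
  Fext Phi k = \sum_(h : {ffun 'I_p -> 'I_16})
    kernel k [tuple node k (h x) | x < p] * \prod_(x < p) Phi (node k (h x)).
Proof.
move=> [Phi_supp _]; have node_inj := @Anode_inj (Fcomp_node_sign k).
have PhiS : fsupp kap2 Phi (map (node k) (enum 'I_16)).
  split; first by rewrite (map_inj_uniq node_inj) enum_uniq.
    by apply/allP => x /mapP [i _ ->]; apply/onCircle_inAt/inAt_Anode.
  move=> x /Phi_supp /(Anode_onto (Fcomp_node_sign k)) [i <-].
  by rewrite map_f ?mem_enum.
rewrite (FextE k PhiS) wordsum_map -sum_ffun_wordsum; apply: eq_bigr => h _.
by rewrite /kernel_word -map_comp seq_tuple_enum big_map_enum_ord.
Qed.

Lemma Fext_restrict Phi : inEc Phi -> eqEk kap2 (Fext Phi) (emb (Ft (crd Phi))).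
Proof.
move=> PhiEc k kC; have node_inj := @Anode_inj (Fcomp_node_sign k).
rewrite FextE_node // -[emb _ k]/(Fcomp k Phi) FcompE //.
under eq_bigr => h _ do rewrite (kernelE kC (tupleA_node k h)) /sym_coef !mulr_suml.
rewrite exchange_big /=; apply: eq_bigr => f _.
transitivity (Fcomp_coef k f / nperm%:R * \sum_(g : {ffun 'I_p -> 'I_p} | injectiveb g)
    \sum_(h : {ffun 'I_p -> 'I_16})
       (\prod_(y < p) (f y == h (g y))%:R) * \prod_(x < p) Phi (node k (h x))).
  under eq_bigr => h _ do rewrite mulr_sumr !mulr_suml.
  rewrite exchange_big mulr_sumr; apply: eq_bigr => g _; rewrite mulr_sumr.
  apply: eq_bigr => h _; rewrite (eq_bigr (fun y => (f y == h (g y))%:R)); first by ring.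
  by move=> y _; rewrite tnth_map tnth_ord_tuple (inj_eq node_inj).
rewrite (eq_bigr (fun _ => \prod_(y < p) Phi (node k (f y)))) => [|g /injectiveP g_inj].
  rewrite sumr_const -[#|_|]/nperm -mulr_natr.
  by field; apply: nperm_neq0.
exact: (sum_ffun_comp_inj f (fun i => Phi (node k i)) g_inj).
Qed.

End Extension.
End WaveVectors.

Theorem mainTheorem19 (R : realType) (l1 n1 l2 n2 p : nat)
  (hl : (l2 < l1)%N) (hn1 : (0 < n1 < l1)%N) (hn2 : (0 < n2 < l2)%N)
  (hk : (l1 ^ 2 + n1 ^ 2 = l2 ^ 2 + n2 ^ 2)%N)
  (Ft : 'rV[R[i]]_8 -> 'rV[R[i]]_8)
  (hpoly : homogPoly p Ft)
  (heq : Gamma_equivariant l1 n1 l2 n2 Ft) :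
  let kap2 : R := (l1 ^ 2 + n1 ^ 2)%N%:R in
  (exists F : efield R -> efield R,
      [/\ isPolyVF kap2 p F, E2equivariant kap2 F &
          forall Phi, inEc l1 n1 l2 n2 Phi ->
            eqEk kap2 (F Phi) (embEc l1 n1 l2 n2 (Ft (coordEc l1 n1 l2 n2 Phi)))])
  <->
  (forall (th : R) (Phi : efield R),
      inEc l1 n1 l2 n2 Phi -> inEc l1 n1 l2 n2 (actO (rotmx th) Phi) ->
      eqEk kap2 (actO (rotmx th) (embEc l1 n1 l2 n2 (Ft (coordEc l1 n1 l2 n2 Phi))))
               (embEc l1 n1 l2 n2 (Ft (coordEc l1 n1 l2 n2 (actO (rotmx th) Phi))))).
Proof.
move=> kap2; split.
- case=> F [_ F_E2 F_restr] th Phi PhiEc rPhiEc k kC.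
  have rot_orth := orthogonal2_rotmx th.
  have kC' : onCircle kap2 (mxapp (invmx (rotmx th)) k).
    by rewrite onCircle_mxapp //; apply: orthogonal2V.
  have [F_O _] := F_E2 Phi (inEc_finsupp hl hn1 hn2 hk PhiEc).
  by rewrite /actO -(F_restr _ PhiEc _ kC') -(F_restr _ rPhiEc _ kC) (F_O _ rot_orth _ kC).
- move=> hrot; exists (Fext l1 n1 l2 n2 p Ft); split.
  + exact: Fext_poly.
  + exact: (Fext_E2equivariant hl hn1 hn2 hk p heq hrot).
  + exact: (Fext_restrict hl hn1 hn2 hk hpoly heq hrot).
Qed.
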